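(* Let $(a_i)_{i\ge1}$ be a sequence of mild signature, let $(b_i)_{i\ge1}$ be any sequence of integers, and let $A$ be the associated replacement sequence. If $\beta$ is a real number such that the sequence $\|\beta b_i\|$ does not converge to $0$, then the Weyl sums $x_n=\frac1n\sum_{i=0}^{n-1}e(\beta A(i))$ converge to $0$ as $n\to\infty$.
   Context: $e(x)=e^{2\pi i x}$ and $\|x\|$ is the distance from $x$ to the nearest integer. Greedy representation: given an increasing sequence of positive integers $(a_i)$ with $a_1=1$, the base-$a_i$ representation of $n\ge0$ is obtained by repeatedly subtracting from what remains the largest $a_i$ that is at most what remains (possibly the same $a_i$ several times), until $0$ is reached. Mild signature: $(a_i)$ is an increasing sequence of positive integers with $a_1=1$ such that (1) there is a constant $L$ such that for every $n$, greedily writing $a_n$ as a sum of terms among $a_1,\dots,a_{n-1}$ uses only $a_{n-1},\dots,a_{n-L}$, giving $a_n=c_1a_{n-1}+\dots+c_La_{n-L}$ with integers $c_j\ge0$ (possibly depending on $n$); and (2) there are $r,s>1$ with $ra_n<a_{n+1}<sa_n$ for all $n$. Replacement sequence: if $n=\sum_i m_ia_i$ is the greedy base-$a_i$ representation of $n$, then $A(n)=\sum_i m_ib_i$ (so $A(0)=0$). *)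

From Stdlib Require Import Reals ZArith Arith.
From Coquelicot Require Import Coquelicot.
Open Scope R_scope.

(* Sequences are 0-indexed in Rocq: a i stands for a_{i+1}, b i for b_{i+1}. *)

Definition e (x : R) : C := (cos (2 * PI * x), sin (2 * PI * x)).

(* ||x|| : distance from x to the nearest integer.  floor x = up x - 1. *)
Definition dist_int (x : R) : R :=
  let f := x - (IZR (up x) - 1) in Rmin f (1 - f).

(* Greedy digits.  [gdigit a K m j] is the number of times a j is used when
   m is written greedily with the terms a 0, ..., a (K-1): the terms are
   processed from the largest index down, each one subtracted as many times
   as possible (m / a k times) from what remains. *)
Fixpoint gdigit (a : nat -> nat) (K m j : nat) : nat :=
  match K with
  | O => O
  | S k => if Nat.eqb j k then m / a k else gdigit a k (m mod a k) j
  end.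

(* Greedy base-(a_i) digit of n at index j (all terms a 0 .. a n are
   available; larger terms exceed n when a is increasing with a 0 = 1). *)
Definition digit (a : nat -> nat) (n j : nat) : nat := gdigit a (S n) n j.

Definition mild_signature (a : nat -> nat) : Prop :=
  a 0%nat = 1%nat /\
  (forall i, (a i < a (S i))%nat) /\
  (* (1): greedily writing a n with a 0..a (n-1) only uses a (n-1),...,a (n-L) *)
  (exists L : nat, forall n j, (j + L < n)%nat -> gdigit a n (a n) j = 0%nat) /\
  (exists r s : R, 1 < r /\ 1 < s /\
     forall n, r * INR (a n) < INR (a (S n)) < s * INR (a n)).

Fixpoint sum_Z (f : nat -> Z) (n : nat) : Z :=
  match n with O => 0%Z | S k => (sum_Z f k + f k)%Z end.

Definition replacement (a : nat -> nat) (b : nat -> Z) (n : nat) : Z :=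
  sum_Z (fun j => (Z.of_nat (digit a n j) * b j)%Z) (S n).

Fixpoint sum_C (f : nat -> C) (n : nat) : C :=
  match n with O => RtoC 0 | S k => Cplus (sum_C f k) (f k) end.

Definition weyl (a : nat -> nat) (b : nat -> Z) (beta : R) (n : nat) : C :=
  Cmult (RtoC (/ INR n)) (sum_C (fun i => e (beta * IZR (replacement a b i))) n).

(* Write S(N) for the sum of e(beta A(i)) over i < N.  If u < a_K and
   d a_K + u < a_(K+1), the greedy digits of d a_K + u are those of u plus the
   digit d at a_K, so A(d a_K + u) = d b_K + A(u): a block of [0, a_(K+1)) starting
   at a multiple of a_K carries a rotated copy of a sum over [0, a_K).

   Suppose |S(a_t)| <= lam a_t for all t >= J.  Cutting into such blocks, every
   partial sum satisfies |S(y)| <= lam y + a_J, and every sum over an interval of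
   [0, a_K) is at most lam times its length plus (K + 1) a_J.  Whenever
   ||beta b_k|| >= eps, the sums over [0, m) and [a_k, a_k + m), with
   m = min(a_k, a_(k+1) - a_k) >= c a_(k+1), add up with the factor
   |1 + e(beta b_k)| <= 2 - delta, so the defect lam a_t - |S(a_t)| is at least
   a fixed fraction of lam a_t at t = k + 1.  By condition (1), a_t is a sum of
   the a_i with t - L <= i < t, and the defect is superadditive along this
   expansion; hence the saving persists, diminished by at most s^L, at all later
   t.  Since such k occur infinitely often, lam can be replaced by rho lam for a
   fixed rho < 1; iterating gives |S(a_t)| = o(a_t), and the partial sum bound
   turns this into S(N) = o(N). *)

From Stdlib Require Import Reals ZArith Lia Lra Psatz Classical_Prop.
From Coquelicot Require Import Coquelicot.
Open Scope R_scope.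

Lemma sum_C_ext f g n :
  (forall i, (i < n)%nat -> f i = g i) -> sum_C f n = sum_C g n.
Proof.
  induction n as [|n IH]; intros Hfg; simpl; [reflexivity|].
  rewrite (Hfg n), IH by first [lia | intros i Hi; apply Hfg; lia]; reflexivity.
Qed.

Lemma sum_C_add f m n :
  sum_C f (m + n) = Cplus (sum_C f m) (sum_C (fun i => f (m + i)%nat) n).
Proof.
  induction n as [|n IH]; simpl.
  - rewrite Nat.add_0_r. ring.
  - rewrite Nat.add_succ_r. simpl. rewrite IH. ring.
Qed.

Lemma sum_C_scal_l c f n :
  sum_C (fun i => Cmult c (f i)) n = Cmult c (sum_C f n).
Proof. induction n as [|n IH]; simpl; [|rewrite IH]; ring. Qed.

Lemma Cmod_sum_C_le f n :
  (forall i, (i < n)%nat -> Cmod (f i) <= 1) -> Cmod (sum_C f n) <= INR n.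
Proof.
  induction n as [|n IH]; intros Hf; simpl sum_C.
  - rewrite Cmod_0. simpl. lra.
  - eapply Rle_trans; [apply Cmod_triangle|].
    rewrite S_INR. pose proof (Hf n ltac:(lia)). pose proof (IH ltac:(auto)). lra.
Qed.

Lemma sum_Z_ext f g n :
  (forall i, (i < n)%nat -> f i = g i) -> sum_Z f n = sum_Z g n.
Proof.
  induction n as [|n IH]; intros Hfg; simpl; [reflexivity|].
  rewrite (Hfg n), IH by first [lia | intros i Hi; apply Hfg; lia]; reflexivity.
Qed.

Lemma sum_Z_trailing_0 f K p :
  (forall j, (K <= j)%nat -> f j = 0%Z) -> sum_Z f (K + p) = sum_Z f K.
Proof.
  intros Hf. induction p as [|p IH]; [now rewrite Nat.add_0_r|].
  rewrite Nat.add_succ_r; simpl. rewrite IH, Hf by lia. lia.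
Qed.

Lemma sum_f_R0_weighted_le (c : nat -> nat) x y K :
  (forall i, (i <= K)%nat -> c i <> 0%nat -> x i <= y i) ->
  sum_f_R0 (fun i => INR (c i) * x i) K <= sum_f_R0 (fun i => INR (c i) * y i) K.
Proof.
  intros Hxy. apply sum_Rle. intros i Hi.
  destruct (Nat.eq_dec (c i) 0) as [E|E].
  - rewrite E. simpl. lra.
  - apply Rmult_le_compat_l; [apply pos_INR | auto].
Qed.

Lemma sum_f_R0_ge_last f K : (forall i, (i <= K)%nat -> 0 <= f i) -> f K <= sum_f_R0 f K.
Proof.
  intros Hf. destruct K as [|K]; simpl; [lra|].
  pose proof (sum_Rle (fun _ => 0) f K ltac:(intros; apply Hf; lia)) as Hsum.
  rewrite sum_cte in Hsum. lra.
Qed.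

Lemma e_plus x y : e (x + y) = Cmult (e x) (e y).
Proof.
  unfold e, Cmult; simpl.
  rewrite Rmult_plus_distr_l, cos_plus, sin_plus. f_equal; ring.
Qed.

Lemma Cmod_e x : Cmod (e x) = 1.
Proof.
  unfold e, Cmod; simpl. rewrite !Rmult_1_r, Rplus_comm.
  pose proof (sin2_cos2 (2 * PI * x)) as H. unfold Rsqr in H.
  rewrite H. apply sqrt_1.
Qed.

Lemma Cmod_1_plus_e x : Cmod (Cplus (RtoC 1) (e x)) = sqrt (2 + 2 * cos (2 * PI * x)).
Proof.
  unfold Cmod, e, Cplus, RtoC; simpl. f_equal.
  pose proof (sin2_cos2 (2 * PI * x)) as H. unfold Rsqr in H. nra.
Qed.

Lemma cos_plus_2PI_IZR x z : cos (x + 2 * PI * IZR z) = cos x.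
Proof.
  assert (Hsin : forall y, sin (PI * IZR y) = 0)
    by (intros y; apply sin_eq_0_1; exists y; ring).
  replace (2 * PI * IZR z) with (PI * IZR (2 * z)) by (rewrite mult_IZR; simpl; ring).
  rewrite cos_plus, Hsin, mult_IZR, <- Rmult_assoc, (Rmult_comm PI).
  replace (IZR 2 * PI * IZR z) with (2 * (PI * IZR z)) by (simpl; ring).
  rewrite cos_2a_sin, Hsin. ring.
Qed.

Lemma dist_int_nonneg x : 0 <= dist_int x.
Proof. unfold dist_int. destruct (archimed x). apply Rmin_glb; lra. Qed.

Lemma dist_int_le_half x : dist_int x <= 1/2.
Proof.
  unfold dist_int. set (f := x - (IZR (up x) - 1)).
  destruct (Rle_dec f (1/2)).
  - eapply Rle_trans; [apply Rmin_l | auto].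
  - eapply Rle_trans; [apply Rmin_r | lra].
Qed.

(* [dist_int x] is the distance from the fractional part [f] to [{0, 1}], and
   [cos (2 PI x) = cos (2 PI f) = cos (2 PI (1 - f))]. *)
Lemma cos_2PI_le_dist_int x eps :
  0 < eps -> eps <= dist_int x -> cos (2 * PI * x) <= cos (2 * PI * eps).
Proof.
  intros Heps Hd. unfold dist_int in Hd.
  destruct (archimed x) as [Hup1 Hup2].
  set (f := x - (IZR (up x) - 1)) in *.
  pose proof (Rmin_l f (1 - f)). pose proof (Rmin_r f (1 - f)). pose proof PI_RGT_0.
  replace (2 * PI * x) with (2 * PI * f + 2 * PI * IZR (up x - 1))
    by (unfold f; rewrite minus_IZR; simpl; ring).
  rewrite cos_plus_2PI_IZR.
  destruct (Rle_dec f (1/2)).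
  - apply cos_decr_1; nra.
  - replace (2 * PI * f) with (- (2 * PI * (1 - f)) + 2 * PI * IZR 1) by (simpl; ring).
    rewrite cos_plus_2PI_IZR, cos_neg. apply cos_decr_1; nra.
Qed.

Lemma sqrt_2_plus_2cos_lt_2 eps : 0 < eps <= 1/2 -> sqrt (2 + 2 * cos (2 * PI * eps)) < 2.
Proof.
  intros Heps. pose proof PI_RGT_0.
  assert (Hcos : cos (2 * PI * eps) < 1) by (rewrite <- cos_0; apply cos_decreasing_1; nra).
  assert (Hlt : sqrt (2 + 2 * cos (2 * PI * eps)) < sqrt (2 * 2)).
  { apply sqrt_lt_1_alt. pose proof (COS_bound (2 * PI * eps)). lra. }
  rewrite sqrt_square in Hlt by lra. exact Hlt.
Qed.

Lemma Cmod_1_plus_e_le x eps :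
  0 < eps -> eps <= dist_int x ->
  Cmod (Cplus (RtoC 1) (e x)) <= sqrt (2 + 2 * cos (2 * PI * eps)).
Proof.
  intros Heps Hd. rewrite Cmod_1_plus_e. apply sqrt_le_1_alt.
  pose proof (cos_2PI_le_dist_int x eps Heps Hd). lra.
Qed.

Lemma not_is_lim_seq_0_often (u : nat -> R) : ~ is_lim_seq u 0 -> (forall n, 0 <= u n) ->
  exists eps, 0 < eps /\ forall N, exists k, (N <= k)%nat /\ eps <= u k.
Proof.
  intros Hu Hpos. apply NNPP. intros Hnot. apply Hu, is_lim_seq_spec. intros eps.
  apply NNPP. intros Hev. apply Hnot. exists eps. split; [apply cond_pos|].
  intros N. apply NNPP. intros Hk. apply Hev. exists N. intros n Hn.
  rewrite Rminus_0_r, Rabs_pos_eq by auto.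
  apply Rnot_le_lt. intros Hle. apply Hk. exists n. auto.
Qed.

Lemma average_lim_0 (f : nat -> C) :
  (forall eta, 0 < eta -> exists M, forall N, (M <= N)%nat -> Cmod (sum_C f N) <= eta * INR N) ->
  filterlim (fun n => Cmult (RtoC (/ INR n)) (sum_C f n)) eventually (locally (RtoC 0)).
Proof.
  intros Hsmall. apply filterlim_locally. intros eps.
  pose proof (cond_pos eps).
  destruct (Hsmall (eps / 2)) as [M HM]; [lra|].
  exists (S M). intros n Hn. specialize (HM n ltac:(lia)).
  assert (Hn0 : 0 < INR n) by (apply lt_0_INR; lia).
  apply C_NormedModule_mixin_compat1.
  replace (minus _ (RtoC 0)) with (Cmult (RtoC (/ INR n)) (sum_C f n))
    by (unfold minus, plus, opp; simpl; rewrite Copp_0, Cplus_0_r; reflexivity).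
  rewrite Cmod_mult, Cmod_R, Rabs_pos_eq by (left; apply Rinv_0_lt_compat, Hn0).
  apply (Rmult_le_compat_l (/ INR n)) in HM; [|left; apply Rinv_0_lt_compat, Hn0].
  replace (/ INR n * (eps / 2 * INR n)) with (eps / 2) in HM by (field; lra).
  lra.
Qed.

Section Greedy.

Variable a : nat -> nat.
Hypothesis a0 : a 0%nat = 1%nat.
Hypothesis a_lt_S : forall i, (a i < a (S i))%nat.

Lemma a_ge_S i : (S i <= a i)%nat.
Proof. induction i; [rewrite a0 | pose proof (a_lt_S i)]; lia. Qed.

Lemma a_le i j : (i <= j)%nat -> (a i <= a j)%nat.
Proof. induction 1 as [|j _ IH]; [lia | pose proof (a_lt_S j); lia]. Qed.

Lemma a_pos i : (0 < a i)%nat.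
Proof. pose proof (a_ge_S i). lia. Qed.

Lemma gdigit_S K m j :
  gdigit a (S K) m j = if Nat.eqb j K then (m / a K)%nat else gdigit a K (m mod a K) j.
Proof. reflexivity. Qed.

Lemma gdigit_S_neq K m j : j <> K -> gdigit a (S K) m j = gdigit a K (m mod a K) j.
Proof. intros Hj. rewrite gdigit_S. now destruct (Nat.eqb_spec j K). Qed.

Lemma gdigit_ge K m j : (K <= j)%nat -> gdigit a K m j = 0%nat.
Proof.
  revert m. induction K as [|K IH]; intros m Hj; simpl; [reflexivity|].
  destruct (Nat.eqb_spec j K); [lia | apply IH; lia].
Qed.

Lemma gdigit_extend K p m j : (m < a K)%nat -> gdigit a (K + p) m j = gdigit a K m j.
Proof.
  intros Hm. induction p as [|p IH]; [now rewrite Nat.add_0_r|].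
  rewrite Nat.add_succ_r, gdigit_S.
  pose proof (a_le K (K + p) ltac:(lia)).
  destruct (Nat.eqb_spec j (K + p)) as [->|].
  - rewrite gdigit_ge by lia. apply Nat.div_small. lia.
  - rewrite Nat.mod_small by lia. exact IH.
Qed.

Lemma gdigit_expansion K y :
  sum_f_R0 (fun i => INR (gdigit a (S K) y i) * INR (a i)) K = INR y.
Proof.
  revert y. induction K as [|K IH]; intros y.
  - simpl. rewrite a0, Nat.div_1_r. simpl. ring.
  - cbn [sum_f_R0].
    rewrite (sum_eq _ (fun i => INR (gdigit a (S K) (y mod a (S K)) i) * INR (a i)))
      by (intros i Hi; rewrite gdigit_S_neq by lia; reflexivity).
    rewrite IH, gdigit_S, Nat.eqb_refl.
    rewrite (Nat.div_mod y (a (S K))) at 3 by (pose proof (a_pos (S K)); lia).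
    rewrite plus_INR, mult_INR. ring.
Qed.

Lemma gdigit_self_top K : (1 <= gdigit a (S K) (a (S K)) K)%nat.
Proof.
  rewrite gdigit_S, Nat.eqb_refl. pose proof (a_lt_S K). pose proof (a_pos K).
  apply Nat.div_le_lower_bound; lia.
Qed.

Variable b : nat -> Z.

Definition greedy_value K m : Z :=
  sum_Z (fun j => (Z.of_nat (gdigit a K m j) * b j)%Z) K.

Lemma greedy_value_extend K p m : (m < a K)%nat -> greedy_value (K + p) m = greedy_value K m.
Proof.
  intros Hm. unfold greedy_value.
  rewrite (sum_Z_ext _ (fun j => (Z.of_nat (gdigit a K m j) * b j)%Z)).
  - apply sum_Z_trailing_0. intros j Hj. rewrite gdigit_ge by lia. lia.
  - intros i _. rewrite gdigit_extend; auto.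
Qed.

Lemma replacement_greedy_value K m : (m < a K)%nat -> replacement a b m = greedy_value K m.
Proof.
  intros Hm. change (replacement a b m) with (greedy_value (S m) m).
  assert (Hs : (m < a (S m))%nat) by (pose proof (a_ge_S (S m)); lia).
  destruct (Nat.le_gt_cases K (S m)).
  - replace (S m) with (K + (S m - K))%nat by lia. apply greedy_value_extend; auto.
  - replace K with (S m + (K - S m))%nat by lia. symmetry. apply greedy_value_extend; auto.
Qed.

Lemma replacement_block K d u : (u < a K)%nat -> (d * a K + u < a (S K))%nat ->
  replacement a b (d * a K + u) = (Z.of_nat d * b K + replacement a b u)%Z.
Proof.
  intros Hu Hd.
  rewrite (replacement_greedy_value (S K)), (replacement_greedy_value K u) by auto.
  unfold greedy_value. cbn [sum_Z]. rewrite gdigit_S, Nat.eqb_refl.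
  assert (Hq : ((d * a K + u) / a K = d)%nat).
  { rewrite Nat.add_comm, Nat.div_add, Nat.div_small by (pose proof (a_pos K); lia). lia. }
  assert (Hr : ((d * a K + u) mod a K = u)%nat).
  { rewrite Nat.add_comm, Nat.Div0.mod_add. apply Nat.mod_small; lia. }
  rewrite Hq, (sum_Z_ext _ (fun j => (Z.of_nat (gdigit a K u j) * b j)%Z)); [lia|].
  intros i Hi. rewrite gdigit_S_neq, Hr by lia. reflexivity.
Qed.

End Greedy.

Section WeylSums.

Variable a : nat -> nat.
Hypothesis a0 : a 0%nat = 1%nat.
Hypothesis a_lt_S : forall i, (a i < a (S i))%nat.
Variable b : nat -> Z.
Variable beta : R.

(* [wsum 0 n] is convertible to the sum inside [weyl a b beta n]. *)
Definition wsum x n := sum_C (fun i => e (beta * IZR (replacement a b (x + i)))) n.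

Lemma wsum_add x m n : wsum x (m + n) = Cplus (wsum x m) (wsum (x + m) n).
Proof.
  unfold wsum. rewrite sum_C_add. f_equal.
  apply sum_C_ext. intros i _. do 4 f_equal. lia.
Qed.

Lemma Cmod_wsum_le x n : Cmod (wsum x n) <= INR n.
Proof. apply Cmod_sum_C_le. intros. rewrite Cmod_e. lra. Qed.

Lemma wsum_block K d u n : (u + n <= a K)%nat -> (d * a K + u + n <= a (S K))%nat ->
  wsum (d * a K + u) n = Cmult (e (beta * IZR (Z.of_nat d * b K))) (wsum u n).
Proof.
  intros Hu Hd. unfold wsum. rewrite <- sum_C_scal_l. apply sum_C_ext. intros i Hi.
  replace (d * a K + u + i)%nat with (d * a K + (u + i))%nat by lia.
  rewrite replacement_block, <- e_plus, plus_IZR by (auto; lia).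
  f_equal. ring.
Qed.

Lemma Cmod_wsum_block K d u n : (u + n <= a K)%nat -> (d * a K + u + n <= a (S K))%nat ->
  Cmod (wsum (d * a K + u) n) = Cmod (wsum u n).
Proof. intros. rewrite wsum_block, Cmod_mult, Cmod_e by auto. ring. Qed.

Lemma Cmod_wsum_multiple_le K d : (d * a K <= a (S K))%nat ->
  Cmod (wsum 0 (d * a K)) <= INR d * Cmod (wsum 0 (a K)).
Proof.
  induction d as [|d IH]; intros Hd.
  - simpl. unfold wsum; simpl. rewrite Cmod_0. lra.
  - replace (S d * a K)%nat with (d * a K + a K)%nat by (simpl; lia).
    rewrite wsum_add. eapply Rle_trans; [apply Cmod_triangle|].
    replace (0 + d * a K)%nat with (d * a K + 0)%nat by lia.
    rewrite Cmod_wsum_block, S_INR by (simpl in Hd; lia).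
    pose proof (IH ltac:(simpl in Hd; lia)). lra.
Qed.

Lemma Cmod_wsum_digits_le K y : (y <= a (S K))%nat ->
  Cmod (wsum 0 y) <= sum_f_R0 (fun i => INR (gdigit a (S K) y i) * Cmod (wsum 0 (a i))) K.
Proof.
  revert y. induction K as [|K IH]; intros y Hy.
  - simpl. rewrite a0, Nat.div_1_r.
    replace (Cmod (wsum 0 1)) with 1
      by (unfold wsum; simpl; rewrite Cplus_0_l, Cmod_e; reflexivity).
    rewrite Rmult_1_r. apply Cmod_wsum_le.
  - cbn [sum_f_R0].
    rewrite (sum_eq _ (fun i => INR (gdigit a (S K) (y mod a (S K)) i) * Cmod (wsum 0 (a i))))
      by (intros i Hi; rewrite gdigit_S_neq by lia; reflexivity).
    rewrite gdigit_S, Nat.eqb_refl.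
    pose proof (a_pos a a0 a_lt_S (S K)) as Hpos.
    pose proof (Nat.div_mod y (a (S K)) ltac:(lia)) as Hdiv.
    pose proof (Nat.mod_upper_bound y (a (S K)) ltac:(lia)) as Hmod.
    set (d := (y / a (S K))%nat) in *. set (u := (y mod a (S K))%nat) in *.
    pose proof (IH u ltac:(lia)). pose proof (Cmod_wsum_multiple_le (S K) d ltac:(lia)).
    replace y with (d * a (S K) + u)%nat by lia.
    rewrite wsum_add. eapply Rle_trans; [apply Cmod_triangle|].
    replace (0 + d * a (S K))%nat with (d * a (S K) + 0)%nat by lia.
    rewrite Cmod_wsum_block by lia. lra.
Qed.

Definition defect lam t := lam * INR (a t) - Cmod (wsum 0 (a t)).

(* [a (S K)] is the sum of its greedy digits times the [a i], while
   [Cmod_wsum_digits_le] bounds [|S(a (S K))|] by the same combination of the [|S(a i)|]. *)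
Lemma defect_digits_le lam K :
  sum_f_R0 (fun i => INR (gdigit a (S K) (a (S K)) i) * defect lam i) K <= defect lam (S K).
Proof.
  pose proof (Cmod_wsum_digits_le K (a (S K)) (le_n _)) as Hdigits.
  unfold defect.
  rewrite (sum_eq _ (fun i => INR (gdigit a (S K) (a (S K)) i) * INR (a i) * lam
                              + INR (gdigit a (S K) (a (S K)) i) * Cmod (wsum 0 (a i)) * -1))
    by (intros; ring).
  rewrite plus_sum, <- !scal_sum, gdigit_expansion by auto. lra.
Qed.

Definition ratio_le lam J :=
  forall t, (J <= t)%nat -> Cmod (wsum 0 (a t)) <= lam * INR (a t).

Section RatioBound.

Variables (lam : R) (J : nat).
Hypothesis lam_ge0 : 0 <= lam.
Hypothesis ratio_lam : ratio_le lam J.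

Lemma Cmod_wsum_aligned_le K : (J <= K)%nat ->
  (forall y, (y <= a K)%nat -> Cmod (wsum 0 y) <= lam * INR y + INR (a J)) ->
  forall n d, (d * a K + n <= a (S K))%nat ->
  Cmod (wsum (d * a K) n) <= lam * INR n + INR (a J).
Proof.
  intros HK Hprefix n. induction n as [n IH] using (well_founded_induction lt_wf).
  intros d Hd. replace (d * a K)%nat with (d * a K + 0)%nat by lia.
  destruct (Nat.le_gt_cases n (a K)) as [Hn | Hn].
  - rewrite Cmod_wsum_block by lia. now apply Hprefix.
  - replace n with (a K + (n - a K))%nat by lia.
    rewrite wsum_add, plus_INR. eapply Rle_trans; [apply Cmod_triangle|].
    rewrite Cmod_wsum_block by lia.
    replace (d * a K + 0 + a K)%nat with (S d * a K)%nat by (simpl; lia).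
    pose proof (ratio_lam K HK).
    pose proof (a_pos a a0 a_lt_S K).
    pose proof (IH (n - a K)%nat ltac:(lia) (S d) ltac:(simpl; lia)). lra.
Qed.

Lemma Cmod_wsum_prefix_le K : (J <= K)%nat ->
  forall y, (y <= a K)%nat -> Cmod (wsum 0 y) <= lam * INR y + INR (a J).
Proof.
  induction 1 as [|K HK IH]; intros y Hy.
  - eapply Rle_trans; [apply Cmod_wsum_le|].
    apply le_INR in Hy. pose proof (pos_INR y). nra.
  - replace 0%nat with (0 * a K)%nat by lia.
    apply Cmod_wsum_aligned_le; auto.
Qed.

(* Each of the [K + 1] levels of the greedy decomposition of an interval
   contributes at most one error term [a J]. *)
Lemma Cmod_wsum_interval_le K : (J <= K)%nat ->
  forall x n, (x + n <= a K)%nat -> Cmod (wsum x n) <= lam * INR n + INR (S K) * INR (a J).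
Proof.
  induction 1 as [|K HK IH]; intros x n Hxn.
  - eapply Rle_trans; [apply Cmod_wsum_le|].
    assert (INR n <= INR (a J)) by (apply le_INR; lia).
    rewrite S_INR. pose proof (pos_INR n). pose proof (pos_INR J). nra.
  - pose proof (a_pos a a0 a_lt_S K) as Hpos.
    pose proof (Nat.div_mod x (a K) ltac:(lia)) as Hdiv.
    pose proof (Nat.mod_upper_bound x (a K) ltac:(lia)) as Hmod.
    set (d := (x / a K)%nat) in *. set (u := (x mod a K)%nat) in *.
    replace x with (d * a K + u)%nat in * by lia.
    rewrite S_INR. pose proof (pos_INR (a J)).
    destruct (Nat.le_gt_cases (u + n) (a K)) as [Hn | Hn].
    + rewrite Cmod_wsum_block by lia. pose proof (IH u n Hn). lra.
    + replace n with ((a K - u) + (n - (a K - u)))%nat by lia.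
      rewrite wsum_add, plus_INR. eapply Rle_trans; [apply Cmod_triangle|].
      rewrite Cmod_wsum_block by lia.
      replace (d * a K + u + (a K - u))%nat with (S d * a K)%nat by (simpl; lia).
      pose proof (IH u (a K - u)%nat ltac:(lia)).
      pose proof (Cmod_wsum_aligned_le K HK (Cmod_wsum_prefix_le K HK) (n - (a K - u))%nat (S d)
                    ltac:(simpl; lia)).
      lra.
Qed.

Lemma wsum_split_pair k m : (m <= a k)%nat -> (a k + m <= a (S k))%nat ->
  wsum 0 (a (S k)) =
  Cplus (Cplus (Cmult (Cplus (RtoC 1) (e (beta * IZR (b k)))) (wsum 0 m))
               (wsum m (a k - m)))
        (wsum (a k + m) (a (S k) - a k - m)).
Proof.
  intros Hm Hk.
  replace (a (S k)) with (m + (a k - m) + m + (a (S k) - a k - m))%nat at 1 by lia.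
  rewrite !wsum_add.
  replace (0 + (m + (a k - m)))%nat with (1 * a k + 0)%nat by lia.
  replace (0 + (m + (a k - m) + m))%nat with (a k + m)%nat by lia.
  rewrite wsum_block by lia.
  replace (Z.of_nat 1 * b k)%Z with (b k) by lia.
  simpl Nat.add. ring.
Qed.

Lemma Cmod_wsum_saving k delta : (J <= k)%nat -> 0 <= delta ->
  Cmod (Cplus (RtoC 1) (e (beta * IZR (b k)))) <= 2 - delta ->
  Cmod (wsum 0 (a (S k))) <=
    lam * INR (a (S k)) - delta * lam * INR (Nat.min (a k) (a (S k) - a k))
    + INR (2 * k + 5) * INR (a J).
Proof.
  intros Hk Hdelta Hsave. pose proof (a_lt_S k).
  set (m := Nat.min (a k) (a (S k) - a k)).
  assert (Hm : (m <= a k /\ a k + m <= a (S k))%nat) by (unfold m; lia).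
  rewrite (wsum_split_pair k m) by lia.
  pose proof (Cmod_wsum_prefix_le k Hk m ltac:(lia)) as Hhead.
  pose proof (Cmod_wsum_interval_le k Hk m (a k - m)%nat ltac:(lia)) as Hmid.
  pose proof (Cmod_wsum_interval_le (S k) ltac:(lia) (a k + m)%nat (a (S k) - a k - m)%nat
                ltac:(lia)) as Htail.
  pose proof (Cmod_ge_0 (Cplus (RtoC 1) (e (beta * IZR (b k))))).
  pose proof (Cmod_ge_0 (wsum 0 m)). pose proof (pos_INR (a J)). pose proof (pos_INR m).
  assert (Hpair : Cmod (Cplus (RtoC 1) (e (beta * IZR (b k)))) * Cmod (wsum 0 m)
                  <= (2 - delta) * (lam * INR m + INR (a J)))
    by (apply Rmult_le_compat; lra).
  eapply Rle_trans; [apply Cmod_triangle|].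
  eapply Rle_trans; [apply Rplus_le_compat_r, Cmod_triangle|].
  rewrite Cmod_mult.
  rewrite !minus_INR in Hmid, Htail by lia. rewrite minus_INR in Htail by lia.
  replace (INR (2 * k + 5)) with (INR (S k) + INR (S (S k)) + 2)
    by (rewrite !S_INR, plus_INR, mult_INR; simpl; ring).
  assert (delta * INR (a J) >= 0) by nra.
  nra.
Qed.

End RatioBound.

Section Propagation.

Variable L : nat.
Hypothesis a_greedy_local : forall n j, (j + L < n)%nat -> gdigit a n (a n) j = 0%nat.
Variable s : R.
Hypothesis s_gt1 : 1 < s.
Hypothesis a_S_lt : forall n, INR (a (S n)) < s * INR (a n).
Variables (lam : R) (J : nat).
Hypothesis ratio_lam : ratio_le lam J.

Lemma gdigit_self_neq0 t i : gdigit a t (a t) i <> 0%nat -> (t <= i + L)%nat.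
Proof.
  intros Hi. destruct (Nat.le_gt_cases t (i + L)); auto.
  exfalso. apply Hi, a_greedy_local. lia.
Qed.

Lemma defect_ge0 t : (J <= t)%nat -> 0 <= defect lam t.
Proof. intros Ht. pose proof (ratio_lam t Ht). unfold defect. lra. Qed.

(* Beyond [J + L] every greedy digit of [a (S K)] sits at an index [>= J], where
   defects are nonnegative, and the leading digit is at least 1. *)
Lemma defect_le_S K : (J + L <= S K)%nat -> (J <= K)%nat -> defect lam K <= defect lam (S K).
Proof.
  intros HJL HK. eapply Rle_trans; [|apply defect_digits_le].
  eapply Rle_trans; [|apply sum_f_R0_ge_last].
  - pose proof (le_INR _ _ (gdigit_self_top a a0 a_lt_S K)) as Htop.
    pose proof (defect_ge0 K HK). change (INR 1) with 1 in Htop. cbv beta. nra.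
  - intros i Hi. destruct (Nat.eq_dec (gdigit a (S K) (a (S K)) i) 0) as [E|E].
    + rewrite E. simpl. lra.
    + apply Rmult_le_pos; [apply pos_INR|]. apply defect_ge0.
      pose proof (gdigit_self_neq0 (S K) i E). lia.
Qed.

Lemma defect_le p t : (J + L <= p)%nat -> (J < p)%nat -> (p <= t)%nat ->
  defect lam p <= defect lam t.
Proof.
  intros HJL HJ. induction 1 as [|t Hpt IH]; [lra|].
  eapply Rle_trans; [apply IH | apply defect_le_S; lia].
Qed.

Lemma a_le_pow p t : (p <= t)%nat -> INR (a t) <= s ^ (t - p) * INR (a p).
Proof.
  induction 1 as [|t Hpt IH].
  - rewrite Nat.sub_diag. simpl. lra.
  - replace (S t - p)%nat with (S (t - p)) by lia. simpl.
    pose proof (a_S_lt t). pose proof (pos_INR (a t)). nra.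
Qed.

(* By condition (1) the greedy digits of [a t] sit at indices in [[t - L, t)]. *)
Lemma defect_window p g : (J + L <= p)%nat -> (J < p)%nat ->
  (forall t, (p <= t < p + L)%nat -> g * INR (a t) <= defect lam t) ->
  forall t, (p <= t)%nat -> g * INR (a t) <= defect lam t.
Proof.
  intros HJL HJ Hwindow t. induction t as [t IH] using (well_founded_induction lt_wf).
  intros Hpt. destruct (Nat.lt_ge_cases t (p + L)); [apply Hwindow; lia|].
  destruct t as [|K]; [lia|].
  eapply Rle_trans; [|apply defect_digits_le].
  rewrite <- (gdigit_expansion a a0 a_lt_S K (a (S K))), scal_sum.
  rewrite (sum_eq _ (fun i => INR (gdigit a (S K) (a (S K)) i) * (g * INR (a i))))
    by (intros; ring).
  apply sum_f_R0_weighted_le. intros i Hi Hdigit.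
  pose proof (gdigit_self_neq0 (S K) i Hdigit). apply IH; lia.
Qed.

Lemma defect_contraction p D : (J + L <= p)%nat -> (J < p)%nat -> 0 <= D ->
  D * INR (a p) <= defect lam p ->
  forall t, (p <= t)%nat -> D / s ^ L * INR (a t) <= defect lam t.
Proof.
  intros HJL HJ HD Hp. apply defect_window; auto. intros t Ht.
  pose proof (defect_le p t HJL HJ ltac:(lia)).
  pose proof (a_le_pow p t ltac:(lia)).
  assert (s ^ (t - p) <= s ^ L) by (apply Rle_pow; lia || lra).
  assert (HsL : 0 < s ^ L) by (apply pow_lt; lra).
  pose proof (pos_INR (a p)). pose proof (pos_INR (a t)).
  apply (Rmult_le_reg_l (s ^ L)); [exact HsL|].
  replace (s ^ L * (D / s ^ L * INR (a t))) with (D * INR (a t)) by (field; lra).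
  assert (D * INR (a t) <= D * (s ^ L * INR (a p))) by (apply Rmult_le_compat_l; nra).
  assert (s ^ L * (D * INR (a p)) <= s ^ L * defect lam t) by (apply Rmult_le_compat_l; lra).
  nra.
Qed.

End Propagation.

Section Iteration.

Variables (r s : R) (L : nat).
Hypothesis r_gt1 : 1 < r.
Hypothesis s_gt1 : 1 < s.
Hypothesis a_S_bounds : forall n, r * INR (a n) < INR (a (S n)) < s * INR (a n).
Hypothesis a_greedy_local : forall n j, (j + L < n)%nat -> gdigit a n (a n) j = 0%nat.
Variable delta : R.
Hypothesis delta_pos : 0 < delta.
Hypothesis saving_often : forall N, exists k, (N <= k)%nat /\
  Cmod (Cplus (RtoC 1) (e (beta * IZR (b k)))) <= 2 - delta.

Lemma pow_le_a n : r ^ n <= INR (a n).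
Proof.
  induction n as [|n IH]; simpl; [rewrite a0; simpl; lra|].
  pose proof (a_S_bounds n). nra.
Qed.

(* With [q = sqrt r > 1]: [r ^ n = q ^ n * q ^ n >= (n (q - 1)) * q ^ n] and
   [q ^ n -> +oo]. *)
Lemma linear_le_a c : 0 < c ->
  exists N, forall k, (N <= k)%nat -> INR (2 * k + 5) <= c * INR (a (S k)).
Proof.
  intros Hc. set (q := sqrt r).
  assert (Hq : 1 < q) by (unfold q; rewrite <- sqrt_1; apply sqrt_lt_1_alt; lra).
  assert (Hqq : q * q = r) by (apply sqrt_sqrt; lra).
  pose proof (proj2 (is_lim_seq_spec _ _) (is_lim_seq_geom_p q Hq) (5 / (c * (q - 1))))
    as [N HN].
  exists N. intros k Hk.
  pose proof (HN (S k) ltac:(lia)) as Hbig.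
  pose proof (Rle_pow_lin (q - 1) (S k) ltac:(lra)) as Hlin.
  replace (1 + (q - 1)) with q in Hlin by ring.
  pose proof (pow_le_a (S k)) as Hr.
  rewrite <- Hqq, Rpow_mult_distr in Hr.
  assert (Hfive : 5 <= c * (q - 1) * q ^ S k).
  { apply (Rmult_lt_compat_l (c * (q - 1))) in Hbig; [|nra].
    replace (c * (q - 1) * (5 / (c * (q - 1)))) with 5 in Hbig by (field; lra). lra. }
  rewrite S_INR in Hlin. pose proof (pos_INR k).
  assert (0 < q ^ S k) by (apply pow_lt; lra).
  assert (c * q ^ S k * ((INR k + 1) * (q - 1)) <= c * q ^ S k * q ^ S k)
    by (apply Rmult_le_compat_l; nra).
  assert (5 * (INR k + 1) <= c * (q - 1) * q ^ S k * (INR k + 1))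
    by (apply Rmult_le_compat_r; lra).
  assert (c * (q ^ S k * q ^ S k) <= c * INR (a (S k))) by (apply Rmult_le_compat_l; lra).
  rewrite plus_INR, mult_INR. simpl (INR 2). simpl (INR 5). nra.
Qed.

Definition gap := Rmin (/ s) (1 - / r).

Lemma gap_pos : 0 < gap < 1.
Proof.
  assert (Hinv : forall x, 1 < x -> 0 < / x < 1).
  { intros x Hx. split; [apply Rinv_0_lt_compat; lra|].
    rewrite <- Rinv_1. apply Rinv_1_lt_contravar; lra. }
  unfold gap. pose proof (Hinv s s_gt1). pose proof (Hinv r r_gt1).
  pose proof (Rmin_l (/ s) (1 - / r)). split; [apply Rmin_glb_lt|]; lra.
Qed.

Lemma gap_le_min k : gap * INR (a (S k)) <= INR (Nat.min (a k) (a (S k) - a k)).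
Proof.
  pose proof (a_S_bounds k) as [Hr Hs]. pose proof (pos_INR (a (S k))).
  pose proof (Rmin_l (/ s) (1 - / r)). pose proof (Rmin_r (/ s) (1 - / r)).
  assert (Hk : / s * INR (a (S k)) <= INR (a k))
    by (apply (Rmult_le_reg_l s); [lra|]; field_simplify; lra).
  assert (Hk' : INR (a k) <= / r * INR (a (S k)))
    by (apply (Rmult_le_reg_l r); [lra|]; field_simplify; lra).
  unfold gap. destruct (Nat.le_ge_cases (a k) (a (S k) - a k)).
  - rewrite Nat.min_l by lia. nra.
  - rewrite Nat.min_r, minus_INR by (pose proof (a_lt_S k); lia). nra.
Qed.

Lemma delta_le_2 : delta <= 2.
Proof.
  destruct (saving_often 0) as [k [_ Hk]].
  pose proof (Cmod_ge_0 (Cplus (RtoC 1) (e (beta * IZR (b k))))). lra.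
Qed.

Definition rho := 1 - delta * gap / (2 * s ^ L).

Lemma rho_bounds : 0 < rho < 1.
Proof.
  unfold rho. pose proof gap_pos. pose proof delta_le_2.
  assert (HsL : 1 <= s ^ L) by (apply pow_R1_Rle; lra).
  assert (0 < delta * gap / (2 * s ^ L)) by (apply Rdiv_lt_0_compat; nra).
  assert (delta * gap / (2 * s ^ L) < 1).
  { apply (Rmult_lt_reg_l (2 * s ^ L)); [lra|]. field_simplify; nra. }
  lra.
Qed.

(* A saving at an index [k] far beyond [J] (where the error [(2k + 5) a J] is
   negligible) lowers the defect at [k + 1], and [defect_contraction] spreads it. *)
Lemma ratio_le_contract lam J : 0 < lam -> ratio_le lam J -> exists J', ratio_le (rho * lam) J'.
Proof.
  intros Hlam Hratio. pose proof gap_pos. pose proof delta_le_2.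
  set (D := delta * gap * lam / 2).
  assert (HD : 0 < D) by (unfold D; apply Rdiv_lt_0_compat; [repeat apply Rmult_lt_0_compat|]; lra).
  assert (HaJ : 0 < INR (a J)) by (apply lt_0_INR, a_pos; auto).
  destruct (linear_le_a (D / INR (a J))) as [N HN]; [apply Rdiv_lt_0_compat; lra|].
  destruct (saving_often (N + J + L)) as [k [Hk Hsave]].
  pose proof (Cmod_wsum_saving lam J ltac:(lra) Hratio k delta ltac:(lia) ltac:(lra) Hsave).
  pose proof (gap_le_min k). pose proof (HN k ltac:(lia)) as Herror.
  apply (Rmult_le_compat_r (INR (a J))) in Herror; [|lra].
  replace (D / INR (a J) * INR (a (S k)) * INR (a J)) with (D * INR (a (S k))) in Herror
    by (field; lra).
  assert (Hdefect : D * INR (a (S k)) <= defect lam (S k)).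
  { unfold defect, D in *.
    assert (delta * lam * (gap * INR (a (S k)))
            <= delta * lam * INR (Nat.min (a k) (a (S k) - a k))) by (apply Rmult_le_compat_l; nra).
    nra. }
  pose proof (defect_contraction L a_greedy_local s s_gt1 (fun n => proj2 (a_S_bounds n))
                lam J Hratio (S k) D ltac:(lia) ltac:(lia) ltac:(lra) Hdefect) as Hcontr.
  exists (S k). intros t Ht. specialize (Hcontr t Ht). unfold defect in Hcontr.
  replace (rho * lam) with (lam - D / s ^ L)
    by (unfold rho, D; field; pose proof (pow_lt s L ltac:(lra)); lra).
  lra.
Qed.

Lemma ratio_le_pow n : exists J, ratio_le (rho ^ n) J.
Proof.
  induction n as [|n [J HJ]].
  - exists 0%nat. intros t _. rewrite pow_O, Rmult_1_l. apply Cmod_wsum_le.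
  - pose proof rho_bounds.
    destruct (ratio_le_contract (rho ^ n) J) as [J' HJ']; [apply pow_lt; lra | exact HJ |].
    exists J'. exact HJ'.
Qed.

Lemma ratio_le_small eta : 0 < eta -> exists J, ratio_le eta J.
Proof.
  intros Heta. pose proof rho_bounds.
  destruct (pow_lt_1_zero rho ltac:(rewrite Rabs_pos_eq; lra) eta Heta) as [n Hn].
  destruct (ratio_le_pow n) as [J HJ]. exists J. intros t Ht.
  eapply Rle_trans; [apply HJ, Ht|]. apply Rmult_le_compat_r; [apply pos_INR|].
  specialize (Hn n (le_n n)). rewrite Rabs_pos_eq in Hn; [lra | apply pow_le; lra].
Qed.

Lemma Cmod_wsum_small eta : 0 < eta ->
  exists M, forall N, (M <= N)%nat -> Cmod (wsum 0 N) <= eta * INR N.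
Proof.
  intros Heta. destruct (ratio_le_small (eta / 2)) as [J HJ]; [lra|].
  assert (HaJ : 0 < INR (a J)) by (apply lt_0_INR, a_pos; auto).
  destruct (INR_unbounded (2 / eta * INR (a J))) as [M HM].
  exists M. intros N HN.
  assert (HNa : (N <= a (Nat.max N J))%nat) by (pose proof (a_ge_S a a0 a_lt_S (Nat.max N J)); lia).
  pose proof (Cmod_wsum_prefix_le (eta / 2) J ltac:(lra) HJ (Nat.max N J) ltac:(lia) N HNa).
  assert (INR M <= INR N) by (apply le_INR, HN).
  assert (INR (a J) <= eta / 2 * INR N).
  { apply (Rmult_le_reg_l (2 / eta)); [apply Rdiv_lt_0_compat; lra|].
    replace (2 / eta * (eta / 2 * INR N)) with (INR N) by (field; lra). lra. }
  lra.
Qed.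

End Iteration.

End WeylSums.

Theorem mainTheorem6 (a : nat -> nat) (b : nat -> Z) (beta : R) :
  mild_signature a ->
  ~ is_lim_seq (fun i => dist_int (beta * IZR (b i))) 0%R ->
  filterlim (weyl a b beta) eventually (locally (RtoC 0%R)).
Proof.
  intros [a0 [a_lt_S [[L a_greedy_local] [r [s [r_gt1 [s_gt1 a_S_bounds]]]]]]] Hnot.
  destruct (not_is_lim_seq_0_often _ Hnot (fun k => dist_int_nonneg _)) as [eps [Heps Hoften]].
  assert (Heps_half : eps <= 1/2).
  { destruct (Hoften 0%nat) as [k [_ Hk]]. pose proof (dist_int_le_half (beta * IZR (b k))). lra. }
  set (delta := 2 - sqrt (2 + 2 * cos (2 * PI * eps))).
  assert (Hdelta : 0 < delta) by (pose proof (sqrt_2_plus_2cos_lt_2 eps); unfold delta; lra).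
  apply (average_lim_0 (fun i => e (beta * IZR (replacement a b i)))).
  apply (Cmod_wsum_small a a0 a_lt_S b beta r s L r_gt1 s_gt1 a_S_bounds a_greedy_local
           delta Hdelta).
  intros N. destruct (Hoften N) as [k [Hk Hdist]]. exists k. split; [exact Hk|].
  unfold delta. replace (2 - (2 - sqrt (2 + 2 * cos (2 * PI * eps))))
    with (sqrt (2 + 2 * cos (2 * PI * eps))) by ring.
  apply Cmod_1_plus_e_le; assumption.
Qed.
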